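(* There exists no rectifying curve in $\mathbb{E}^n$ all of whose curvatures $\kappa_1,\dots,\kappa_{n-1}$ are non-zero constants.
   Context: For an arclength parameterized curve $\alpha$ in $\mathbb{E}^n$ that is $n$ times continuously differentiable, the Frenet frame $T,N,B_1,\dots,B_{n-2}$ is orthonormal and satisfies $T'=\kappa_1N$, $N'=-\kappa_1T+\kappa_2B_1$, $B_1'=-\kappa_2N+\kappa_3B_2$, $B_i'=-\kappa_{i+1}B_{i-1}+\kappa_{i+2}B_{i+1}$ for $i\in\{2,\dots,n-3\}$, $B_{n-2}'=-\kappa_{n-1}B_{n-3}$, where $\kappa_1,\dots,\kappa_{n-1}$ are the curvatures and $\kappa_1,\dots,\kappa_{n-2}>0$. A curve $\alpha$ is a rectifying curve if there is a fixed point $p$ such that for all $s$, $\langle\alpha(s)-p,N(s)\rangle=0$. *)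

From HB Require Import structures.
From mathcomp Require Import all_boot all_order all_algebra.
From mathcomp Require Import all_classical all_reals all_analysis.
Set Implicit Arguments. Unset Strict Implicit. Unset Printing Implicit Defensive.
Import Order.TTheory GRing.Theory Num.Theory numFieldNormedType.Exports.
Local Open Scope classical_set_scope.
Local Open Scope ring_scope.

Section Defs.
Variable R : realType.

Definition dotE (n : nat) (x y : 'I_n -> R) : R := \sum_(j < n) x j * y j.

Definition open_itv (a b : \bar R) : set R := [set x | (a < x%:E)%E /\ (x%:E < b)%E].

Definition Ck_on (k : nat) (I : set R) (f : R -> R) : Prop :=
  (forall m, (m < k)%N -> forall x, I x -> derivable (derive1n m f) x 1) /\
  (forall x, I x -> {for x, continuous (fun y : R => derive1n k f y : R)}).

(* A curve alpha : I -> E^n (coordinates alpha j), n-times continuously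
   differentiable and parameterized by arclength, with Frenet frame
   E 0 = T, E 1 = N, E (k+1) = B_k (1 <= k <= n-2) and curvatures
   kappa 1, ..., kappa (n-1) (constant real numbers here, indices nat). *)
Definition arclength_Cn_curve (n : nat) (I : set R) (alpha : 'I_n -> R -> R) :=
  (forall j, Ck_on n I (alpha j)) /\
  (forall s, I s -> dotE (fun j => derive1 (alpha j) s)
                         (fun j => derive1 (alpha j) s) = 1).

Definition frenet_frame (n : nat) (I : set R) (alpha : 'I_n -> R -> R)
    (E : nat -> 'I_n -> R -> R) (kappa : nat -> R) : Prop :=
  (forall s, I s -> forall i k, (i < n)%N -> (k < n)%N ->
     dotE (fun j => E i j s) (fun j => E k j s) = (if i == k then 1 else 0)) /\
  (forall s, I s -> forall j, E 0%N j s = derive1 (alpha j) s) /\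
  (forall s, I s -> forall i j, (i < n)%N -> derivable (E i j) s 1 /\
     derive1 (E i j) s =
       (if i == 0%N then 0 else - kappa i * E i.-1 j s) +
       (if (i.+1 < n)%N then kappa i.+1 * E i.+1 j s else 0)) /\
  (forall i, (1 <= i)%N -> (i <= n - 2)%N -> 0 < kappa i).

Definition rectifying (n : nat) (I : set R) (alpha : 'I_n -> R -> R)
    (E : nat -> 'I_n -> R -> R) : Prop :=
  exists p : 'I_n -> R, forall s, I s ->
    dotE (fun j => alpha j s - p j) (fun j => E 1%N j s) = 0.

End Defs.

From HB Require Import structures.
From mathcomp Require Import all_boot all_order all_algebra.
From mathcomp Require Import all_classical all_reals all_analysis.
From mathcomp Require Import lra ring zify.
Set Implicit Arguments. Unset Strict Implicit. Unset Printing Implicit Defensive.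
Import Order.TTheory GRing.Theory Num.Theory numFieldNormedType.Exports.
Local Open Scope ring_scope.

(* Let h_i = <alpha - p, E_i> be the coordinates of alpha - p in the Frenet
   frame.  The Frenet equations give h_i' = [i = 0] - kappa_i h_(i-1) +
   kappa_(i+1) h_(i+1), and the curve is rectifying when h_1 = 0, so that
   h_0' = 1.  Solving the equation for h_(i+1)' for h_(i+2) shows inductively
   that every h_i is an affine function A_i h_0 + B_i of h_0; since
   kappa_1, ..., kappa_(n-2) > 0, A_i > 0 for even i while A_i = 0 <= B_i for
   odd i.  The last equation h_(n-1)' = - kappa_(n-1) h_(n-2) then reads
   A_(n-1) = - kappa_(n-1) (A_(n-2) h_0 + B_(n-2)): for even n it forces h_0
   to be constant, and for odd n it becomes
   kappa_(n-2) A_(n-3) = - kappa_(n-1)^2 B_(n-2), whose left side is positive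
   and right side nonpositive.  Expressing everything through h_0 rather than
   through s keeps all derivative computations local: no integration on the
   interval is needed. *)

Definition frenet_rhs (R : realType) (n : nat) (k : nat -> R) (v : nat -> R)
    (i : nat) : R :=
  (if i == 0%N then 0 else - k i * v i.-1) +
  (if (i.+1 < n)%N then k i.+1 * v i.+1 else 0).

Lemma is_derive_unique (R : numFieldType) (V W : normedModType R) (f : V -> W)
    (x v : V) (df1 df2 : W) :
  is_derive x v f df1 -> is_derive x v f df2 -> df1 = df2.
Proof.
by move=> D1 D2; rewrite -(@derive_val _ _ _ _ _ _ _ D1) (@derive_val _ _ _ _ _ _ _ D2).
Qed.

Section DotProduct.
Variables (R : realType) (n : nat).
Implicit Types (x y z : 'I_n -> R).

Lemma dotEDr x y z : dotE x (fun j => y j + z j) = dotE x y + dotE x z.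
Proof. by rewrite /dotE -big_split; apply: eq_bigr => j _; rewrite mulrDr. Qed.

Lemma dotEZr x a y : dotE x (fun j => a * y j) = a * dotE x y.
Proof. by rewrite /dotE mulr_sumr; apply: eq_bigr => j _; rewrite mulrCA. Qed.

Lemma dotE0r x : dotE x (fun=> 0) = 0.
Proof. by rewrite /dotE big1 // => j _; rewrite mulr0. Qed.

Lemma dotE_frenet_rhs m (k : nat -> R) x (v : nat -> 'I_n -> R) i :
  dotE x (fun j => frenet_rhs m k (fun l => v l j) i) =
  frenet_rhs m k (fun l => dotE x (v l)) i.
Proof.
rewrite /frenet_rhs dotEDr.
by case: (i == 0%N); case: (i.+1 < m)%N; rewrite ?dotE0r ?dotEZr.
Qed.

Lemma is_derive_dotE (u v : 'I_n -> R -> R) (du dv : 'I_n -> R) (s : R) :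
  (forall j, is_derive s 1 (u j) (du j)) ->
  (forall j, is_derive s 1 (v j) (dv j)) ->
  is_derive s 1 (fun t => dotE (fun j => u j t) (fun j => v j t))
    (dotE du (fun j => v j s) + dotE (fun j => u j s) dv).
Proof.
move=> Du Dv.
have -> : (fun t => dotE (fun j => u j t) (fun j => v j t)) =
          \sum_(j < n) (u j * v j) by apply/funext => t; rewrite fct_sumE.
rewrite (_ : _ + _ = \sum_(j < n) (u j s *: dv j + v j s *: du j)).
  exact: is_derive_sum (fun j => is_deriveM (Du j) (Dv j)).
by rewrite /dotE -big_split; apply: eq_bigr => j _; rewrite addrC [du j * _]mulrC.
Qed.

End DotProduct.

Definition frame_coord (R : realType) (n : nat) (alpha : 'I_n -> R -> R)
    (E : nat -> 'I_n -> R -> R) (p : 'I_n -> R) (i : nat) (s : R) : R :=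
  dotE (fun j => alpha j s - p j) (fun j => E i j s).

Section FrameCoordinates.
Variables (R : realType) (n : nat) (I : set R) (alpha : 'I_n -> R -> R)
  (E : nat -> 'I_n -> R -> R) (kappa : nat -> R) (p : 'I_n -> R).
Hypotheses (alpha_Cn : arclength_Cn_curve I alpha)
  (frenet : frenet_frame I alpha E kappa).

Lemma is_derive_frame_coord i s : (i < n)%N -> I s ->
  is_derive s 1 (frame_coord alpha E p i)
    ((if i == 0%N then 1 else 0) +
     frenet_rhs n kappa (fun l => frame_coord alpha E p l s) i).
Proof.
move=> ilt Is; have [[Calpha _] [orth [T_eq [frenet_eq _]]]] := (alpha_Cn, frenet).
have Dalpha j : is_derive s 1 (fun t => alpha j t - p j) (E 0%N j s).
  have [+ _] := Calpha j => /(_ 0%N (leq_ltn_trans (leq0n _) ilt) s Is) /derivableP.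
  by rewrite T_eq // derive1E => D; rewrite -[X in is_derive _ _ _ X]subr0; exact: is_deriveB.
have DE j : is_derive s 1 (E i j) (frenet_rhs n kappa (fun l => E l j s) i).
  by have [/derivableP + e] := frenet_eq s Is i j ilt; rewrite /frenet_rhs -e derive1E.
apply: is_derive_eq; first exact: is_derive_dotE Dalpha DE.
rewrite dotE_frenet_rhs; congr (_ + _).
by rewrite (orth s Is 0%N i) ?(leq_ltn_trans (leq0n i) ilt) // eq_sym.
Qed.

End FrameCoordinates.

Section RectifyingSystem.
Variables (R : realType) (I : set R) (n : nat) (h : nat -> R -> R) (k : nat -> R).
Hypotheses (I_open : open I) (n_ge3 : (3 <= n)%N).
Hypothesis h_ode : forall i s, (i < n)%N -> I s ->
  is_derive s 1 (h i) ((if i == 0%N then 1 else 0) + frenet_rhs n k (fun l => h l s) i).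
Hypothesis h1_eq0 : forall s, I s -> h 1%N s = 0.
Hypothesis k_gt0 : forall i, (1 <= i)%N -> (i <= n - 2)%N -> 0 < k i.
Hypothesis k_last_neq0 : k (n - 1)%N != 0.

Lemma k_neq0 i : (1 <= i)%N -> (i <= n - 1)%N -> k i != 0.
Proof.
move=> i_ge1 i_le; have [i_le2|i_gt2] := leqP i (n - 2).
  by rewrite gt_eqF // k_gt0.
by have -> : i = (n - 1)%N by lia.
Qed.

Lemma is_derive_h0 s : I s -> is_derive s 1 (h 0%N) 1.
Proof.
move=> Is; apply: is_derive_eq; first exact: h_ode (ltnW (ltnW n_ge3)) Is.
by rewrite /frenet_rhs /= (leq_trans _ n_ge3) // h1_eq0 // mulr0 !addr0.
Qed.

Definition affine_in_h0 (f : R -> R) (A B : R) := forall s, I s -> f s = A * h 0%N s + B.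

Lemma is_derive_affine_in_h0 f A B s :
  affine_in_h0 f A B -> I s -> is_derive s 1 f A.
Proof.
move=> fA Is; have near_f : \forall x \near s, A * h 0%N x + B = f x.
  by move: I_open; rewrite openE => /(_ s Is); apply: filterS => x /fA ->.
apply: near_eq_is_derive near_f _; apply: is_derive_eq.
  exact: is_deriveD (is_deriveM (is_derive_cst A s 1) (is_derive_h0 Is)) (is_derive_cst B s 1).
by rewrite /= scaler0 !addr0; exact: mulr1.
Qed.

Lemma h0_nonconstant c s : I s -> ~ affine_in_h0 (h 0%N) 0 c.
Proof.
move=> Is /is_derive_affine_in_h0 /(_ Is) D0.
by have /eqP := is_derive_unique (is_derive_h0 Is) D0; rewrite oner_eq0.
Qed.

Lemma affine_in_h0_step i A0 B0 A1 B1 : (i.+2 < n)%N ->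
  affine_in_h0 (h i) A0 B0 -> affine_in_h0 (h i.+1) A1 B1 ->
  affine_in_h0 (h i.+2) (k i.+1 * A0 / k i.+2) ((A1 + k i.+1 * B0) / k i.+2).
Proof.
move=> lt_i2n hA hA1 s Is.
have k2_neq0 : k i.+2 != 0 by apply: k_neq0; lia.
have := is_derive_unique (h_ode (ltnW lt_i2n) Is) (is_derive_affine_in_h0 hA1 Is).
rewrite /frenet_rhs /= lt_i2n add0r hA // => eA1.
by apply: (mulfI k2_neq0); rewrite -eA1; field.
Qed.

Definition signed_affine i := exists A B,
  affine_in_h0 (h i) A B /\ if odd i then A = 0 /\ 0 <= B else 0 < A.

Lemma signed_affine_pair i : (i <= n - 3)%N -> signed_affine i /\ signed_affine i.+1.
Proof.
elim: i => [_ | i IH le_i].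
  split; first by exists 1, 0; split=> [s _|]; rewrite ?mul1r ?addr0 ?ltr01.
  by exists 0, 0; split=> [s Is|]; rewrite ?h1_eq0 ?mul0r ?addr0.
have [[A0 [B0 [hA0 sA0]]] [A1 [B1 [hA1 sA1]]]] := IH (ltnW le_i).
split; first by exists A1, B1.
have k1_gt0 : 0 < k i.+1 by apply: k_gt0; lia.
have k2_gt0 : 0 < k i.+2 by apply: k_gt0; lia.
exists (k i.+1 * A0 / k i.+2), ((A1 + k i.+1 * B0) / k i.+2); split.
  by apply: affine_in_h0_step hA0 hA1; lia.
move: sA0 sA1 => /=; case: (odd i) => /= [[-> B0_ge0] A1_gt0|A0_gt0 _].
  rewrite mulr0 mul0r; split=> //.
  by rewrite divr_ge0 ?addr_ge0 ?mulr_ge0 // ltW.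
by rewrite divr_gt0 ?mulr_gt0.
Qed.

Lemma last_frenet_equation i A0 B0 A1 B1 : n = i.+3 ->
  affine_in_h0 (h i) A0 B0 -> affine_in_h0 (h i.+1) A1 B1 ->
  forall s, I s -> k i.+1 * A0 / k i.+2 = - k i.+2 * (A1 * h 0%N s + B1).
Proof.
move=> n_eq hA0 hA1 s Is; have lt_i2n : (i.+2 < n)%N by rewrite n_eq.
have hA2 := affine_in_h0_step lt_i2n hA0 hA1.
rewrite (is_derive_unique (is_derive_affine_in_h0 hA2 Is) (h_ode lt_i2n Is)).
by rewrite /frenet_rhs /= n_eq ltnn add0r addr0 hA1.
Qed.

Lemma rectifying_system_unsolvable : ~ (exists s, I s).
Proof.
move=> [s0 Is0]; have [i n_eq] : exists i, n = i.+3 by exists (n - 3)%N; lia.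
have k1_gt0 : 0 < k i.+1 by apply: k_gt0; lia.
have k2_neq0 : k i.+2 != 0 by apply: k_neq0; lia.
have [[A0 [B0 [hA0 sA0]]] [A1 [B1 [hA1 sA1]]]] := @signed_affine_pair i ltac:(lia).
have last_eq := last_frenet_equation n_eq hA0 hA1.
move: sA0 sA1 => /=; case: (odd i) => /= [_ A1_gt0 | A0_gt0 [A1_eq0 B1_ge0]].
  apply: (@h0_nonconstant ((- (k i.+1 * A0 / k i.+2 / k i.+2) - B1) / A1) s0 Is0) => s Is.
  have A1_neq0 : A1 != 0 by rewrite gt_eqF.
  apply: (mulfI A1_neq0); rewrite mul0r add0r.
  have -> : A1 * h 0%N s = - (k i.+1 * A0 / k i.+2 / k i.+2) - B1.
    by rewrite (last_eq s Is); field.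
  by rewrite mulrCA divff // mulr1.
have := last_eq s0 Is0; rewrite A1_eq0 mul0r add0r => e.
have : k i.+1 * A0 = - (k i.+2 ^+ 2 * B1) by rewrite -[LHS](divfK k2_neq0) e; field.
have := mulr_gt0 k1_gt0 A0_gt0; have := mulr_ge0 (sqr_ge0 (k i.+2)) B1_ge0; lra.
Qed.

End RectifyingSystem.

Section OpenInterval.
Variable R : realType.
Local Open Scope ereal_scope.

Lemma open_open_itv (a b : \bar R) : open (open_itv a b).
Proof. exact: (openI (@open_ereal_gt R a) (@open_ereal_lt R b)). Qed.

Lemma open_itv_neq0 (a b : \bar R) : a < b -> exists s, open_itv a b s.
Proof.
rewrite /open_itv; case: a => [r| |]; case: b => [t| |] //= ab.
- by exists ((r + t) / 2)%R; rewrite !lte_fin in ab *; split; lra.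
- by exists (r + 1)%R; rewrite lte_fin ltry; split=> //; lra.
- by exists (t - 1)%R; rewrite lte_fin ltNyr; split=> //; lra.
- by exists 0%R; rewrite ltNyr ltry.
Qed.

End OpenInterval.

Theorem theorem4p2 (R : realType) (n : nat) (hn : (3 <= n)%N) :
  ~ exists (a b : \bar R) (alpha : 'I_n -> R -> R)
           (E : nat -> 'I_n -> R -> R) (kappa : nat -> R),
      [/\ (a < b)%E,
          arclength_Cn_curve (open_itv a b) alpha,
          frenet_frame (open_itv a b) alpha E kappa,
          (forall i, (1 <= i)%N -> (i <= n - 1)%N -> kappa i != 0)
        & rectifying (open_itv a b) alpha E].
Proof.
move=> [a [b [alpha [E [kappa [ab alpha_Cn frenet kappa_neq0 [p rect]]]]]]].
apply: (@rectifying_system_unsolvable R (open_itv a b) n (frame_coord alpha E p) kappa).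
- exact: open_open_itv.
- exact: hn.
- by move=> i s; exact: is_derive_frame_coord.
- exact: rect.
- by case: frenet => _ [_ []].
- by apply: kappa_neq0; lia.
- exact: open_itv_neq0.
Qed.
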